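(* Let $\mathcal{L}$ be a nonempty set and let $\mathcal{C}: 2^{\mathcal{L}} \to 2^{\mathcal{L}}$ be a C-logics. Then there is a restricted fC-model $\langle \mathcal{M}, \models, f\rangle$ for $\mathcal{L}$ such that $\mathcal{C}(A) = \overline{f(\widehat{A})}$ for every $A \subseteq \mathcal{L}$.
   Context: A C-logics on a nonempty set $\mathcal{L}$ is a map $\mathcal{C}: 2^{\mathcal{L}} \to 2^{\mathcal{L}}$ satisfying Inclusion ($A \subseteq \mathcal{C}(A)$ for all $A$) and Cumulativity ($A \subseteq B \subseteq \mathcal{C}(A) \Rightarrow \mathcal{C}(A) = \mathcal{C}(B)$). An fC-model for $\mathcal{L}$ is a triple $\langle \mathcal{M}, \models, f\rangle$ where $\mathcal{M}$ is any set, $\models \subseteq \mathcal{M}\times\mathcal{L}$ is any binary relation, and $f: 2^{\mathcal{M}} \to 2^{\mathcal{M}}$ is defined on all subsets of $\mathcal{M}$ and satisfies, for all $X, Y \subseteq \mathcal{M}$: Contraction $f(X) \subseteq X$, and Local Cumulativity $f(X) \subseteq Y \subseteq X \Rightarrow f(Y) = f(X)$. It is restricted if moreover $f(X) = \emptyset \Rightarrow X = \emptyset$ for all $X \subseteq \mathcal{M}$. For $A \subseteq \mathcal{L}$, $\widehat{A} = \{x \in \mathcal{M} : x \models a \ \forall a \in A\}$; for $X \subseteq \mathcal{M}$, $\overline{X} = \{a \in \mathcal{L} : x \models a \ \forall x \in X\}$. *)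

Definition subset {T : Type} (A B : T -> Prop) : Prop := forall x, A x -> B x.
Definition seteq {T : Type} (A B : T -> Prop) : Prop := forall x, A x <-> B x.

Definition C_logics {L : Type} (C : (L -> Prop) -> (L -> Prop)) : Prop :=
  (forall A, subset A (C A)) /\
  (forall A B, subset A B -> subset B (C A) -> seteq (C A) (C B)).

Definition fC_choice {M : Type} (f : (M -> Prop) -> (M -> Prop)) : Prop :=
  (forall X, subset (f X) X) /\
  (forall X Y, subset (f X) Y -> subset Y X -> seteq (f Y) (f X)).

Definition restricted {M : Type} (f : (M -> Prop) -> (M -> Prop)) : Prop :=
  forall X, (forall x, ~ f X x) -> (forall x, ~ X x).

Definition hat {M L : Type} (sat : M -> L -> Prop) (A : L -> Prop) : M -> Prop :=
  fun x => forall a, A a -> sat x a.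
Definition bar {M L : Type} (sat : M -> L -> Prop) (X : M -> Prop) : L -> Prop :=
  fun a => forall x, X x -> sat x a.

(* The models are the sets of formulas, a model satisfying exactly its own
   members, so that [bar (hat A)] is [A] itself.  The choice function keeps,
   among the models of [X], those equal to the theory [C (bar X)] of [X], as
   long as [X] contains one; otherwise it keeps all of [X].  Cumulativity of [C]
   then turns into local cumulativity of this choice, and for [X = hat A] the
   theory [C A] is itself a member, so the models chosen are exactly [C A]. *)

From Stdlib Require Import Classical.

Definition holds {L : Type} (T : L -> Prop) (a : L) : Prop := T a.

Lemma bar_hat_holds {L : Type} (A : L -> Prop) : seteq (bar holds (hat holds A)) A.
Proof.
  intros a; split.
  - intros Ha. apply (Ha A). intros b Hb; exact Hb.
  - intros Ha T HT. apply HT, Ha.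
Qed.

Lemma bar_antitone {M L : Type} (sat : M -> L -> Prop) (X Y : M -> Prop) :
  subset Y X -> subset (bar sat X) (bar sat Y).
Proof. intros HYX a Ha x Hx. apply Ha, HYX, Hx. Qed.

Lemma seteq_trans {T : Type} (A B D : T -> Prop) :
  seteq A B -> seteq B D -> seteq A D.
Proof. intros HAB HBD x. rewrite (HAB x). apply HBD. Qed.

Lemma seteq_sym {T : Type} (A B : T -> Prop) : seteq A B -> seteq B A.
Proof. intros H x. symmetry. apply H. Qed.

Section CanonicalModel.

Variables (L : Type) (C : (L -> Prop) -> (L -> Prop)).
Hypothesis HC : C_logics C.

Lemma C_seteq (A B : L -> Prop) : seteq A B -> seteq (C A) (C B).
Proof.
  destruct HC as [Hincl Hcum]. intros HAB. apply Hcum.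
  - intros x Hx. apply HAB, Hx.
  - intros x Hx. apply Hincl, HAB, Hx.
Qed.

Definition theory (X : (L -> Prop) -> Prop) : L -> Prop := C (bar holds X).

Definition attains (X : (L -> Prop) -> Prop) : Prop :=
  exists T, X T /\ seteq T (theory X).

Definition select (X : (L -> Prop) -> Prop) (T : L -> Prop) : Prop :=
  X T /\ (attains X -> seteq T (theory X)).

Lemma select_witness (X : (L -> Prop) -> Prop) (T : L -> Prop) :
  X T -> seteq T (theory X) -> select X T.
Proof. intros HT HTX. split; [exact HT | intros _; exact HTX]. Qed.

Lemma select_contraction (X : (L -> Prop) -> Prop) : subset (select X) X.
Proof. intros T [HT _]; exact HT. Qed.

Lemma select_restricted : restricted select.
Proof.
  intros X Hempty T HT. apply (Hempty T). split; [exact HT|].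
  intros [T0 [HT0 HT0X]]. exfalso. apply (Hempty T0), select_witness; assumption.
Qed.

Lemma select_unattained (X : (L -> Prop) -> Prop) :
  ~ attains X -> subset X (select X).
Proof. intros Hn T HT. split; [exact HT | intros Ha; contradiction]. Qed.

Section LocalCumulativity.

Variables X Y : (L -> Prop) -> Prop.
Hypotheses (HfXY : subset (select X) Y) (HYX : subset Y X).

Lemma theory_cumulative : seteq (theory X) (theory Y).
Proof.
  destruct (classic (attains X)) as [[T0 [HT0 HT0X]] | Hn].
  - (* the attained theory [T0] lies in [Y], so it bounds [bar Y] from above *)
    destruct HC as [_ Hcum]. apply Hcum.
    + apply bar_antitone, HYX.
    + intros a Ha. apply HT0X, Ha, HfXY, select_witness; assumption.
  - apply C_seteq. intros a. split.
    + apply bar_antitone, HYX.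
    + apply bar_antitone. intros T HT. apply HfXY, select_unattained; assumption.
Qed.

Lemma attains_cumulative : attains X <-> attains Y.
Proof.
  split; intros [T0 [HT0 HT0X]]; exists T0.
  - split.
    + apply HfXY, select_witness; assumption.
    + exact (seteq_trans _ _ _ HT0X theory_cumulative).
  - split.
    + apply HYX, HT0.
    + exact (seteq_trans _ _ _ HT0X (seteq_sym _ _ theory_cumulative)).
Qed.

Lemma select_cumulative : seteq (select Y) (select X).
Proof.
  intros T. split.
  - intros [HT HTY]. split; [apply HYX, HT|].
    intros HaX. apply (seteq_trans _ _ _ (HTY (proj1 attains_cumulative HaX))).
    apply seteq_sym, theory_cumulative.
  - intros HTX. split; [apply HfXY, HTX|].
    intros HaY. apply (seteq_trans _ _ _ (proj2 HTX (proj2 attains_cumulative HaY))).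
    apply theory_cumulative.
Qed.

End LocalCumulativity.

Lemma select_fC_choice : fC_choice select.
Proof.
  split.
  - exact select_contraction.
  - intros X Y HfXY HYX. exact (select_cumulative X Y HfXY HYX).
Qed.

Lemma bar_select_attained (X : (L -> Prop) -> Prop) :
  attains X -> seteq (bar holds (select X)) (theory X).
Proof.
  intros HaX. pose proof HaX as [T0 [HT0 HT0X]]. intros a. split.
  - intros Ha. apply HT0X, Ha, select_witness; assumption.
  - intros Ha T [_ HTX]. apply (HTX HaX), Ha.
Qed.

Lemma theory_hat (A : L -> Prop) : seteq (C A) (theory (hat holds A)).
Proof. apply C_seteq, seteq_sym, bar_hat_holds. Qed.

Lemma attains_hat (A : L -> Prop) : attains (hat holds A).
Proof.
  exists (C A). split.
  - intros a Ha. apply (proj1 HC), Ha.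
  - apply theory_hat.
Qed.

Lemma C_represented (A : L -> Prop) :
  seteq (C A) (bar holds (select (hat holds A))).
Proof.
  apply (seteq_trans _ _ _ (theory_hat A)).
  apply seteq_sym, bar_select_attained, attains_hat.
Qed.

End CanonicalModel.

Theorem theorem2 (L : Type) (l0 : L) (C : (L -> Prop) -> (L -> Prop)) :
  C_logics C ->
  exists (M : Type) (sat : M -> L -> Prop) (f : (M -> Prop) -> (M -> Prop)),
    fC_choice f /\ restricted f /\
    forall A : L -> Prop, seteq (C A) (bar sat (f (hat sat A))).
Proof.
  intros HC. exists (L -> Prop), holds, (select L C).
  split; [|split].
  - exact (select_fC_choice L C HC).
  - exact (select_restricted L C).
  - exact (C_represented L C HC).
Qed.
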